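(* Let $\{\Pi_{\bm{x}}\}_{\bm{x}\in\{0,1\}^n}$ be a POVM on $(\mathbb{C}^2)^{\otimes n}$. For $\theta\in\mathbb{R}$ let $|\Phi_\theta\rangle=|+_\theta\rangle^{\otimes n}$ with $|+_\theta\rangle=(|0\rangle+e^{i\theta}|1\rangle)/\sqrt2$, let $W^\theta_\Phi=\frac{1}{2^n}\mathbb{1}-|\Phi_\theta\rangle\langle\Phi_\theta|$, and let $\mathscr{Q}^\theta_\Phi(\Pi_{\bm{x}})=2^n\,|\operatorname{tr}[W^\theta_\Phi\Pi_{\bm{x}}]|$. Then for every $\bm{x}$, $$\mathscr{Q}^\theta_\Phi(\Pi_{\bm{x}})=2\left|\sum_{\bm{y}<\bm{z}}\Big(-\operatorname{Re}[\Pi_{\bm{x}}(\bm{y},\bm{z})]\cos[h(\bm{y},\bm{z})\theta]+\operatorname{Im}[\Pi_{\bm{x}}(\bm{y},\bm{z})]\sin[h(\bm{y},\bm{z})\theta]\Big)\right|,$$ where $h(\bm{y},\bm{z})=|\bm{z}|-|\bm{y}|$.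
   Context: $\Pi(\bm{y},\bm{z})=\langle\bm{y}|\Pi|\bm{z}\rangle$ is the entry in row $\bm{y}$, column $\bm{z}$ with respect to the computational basis $\{|\bm{y}\rangle:\bm{y}\in\{0,1\}^n\}$; $|\bm{y}|$ is the Hamming weight of $\bm{y}$; the sum over $\bm{y}<\bm{z}$ runs over all pairs of distinct bit strings with respect to a fixed total order (e.g. lexicographic), so that each unordered pair is counted once. *)

From mathcomp Require Import all_boot all_order all_algebra.
From mathcomp Require Import reals trigo.
From mathcomp.real_closed Require Export complex.

Set Implicit Arguments.
Unset Strict Implicit.
Unset Printing Implicit Defensive.

Import Order.TTheory GRing.Theory Num.Theory.
Local Open Scope ring_scope.

(* Bit strings of length n: the computational basis of (C^2)^{⊗ n}. *)
Definition bits (n : nat) : finType := {ffun 'I_n -> bool}.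

(* Operators on (C^2)^{⊗ n}, given by their entries  A(y,z) = <y|A|z>. *)
Definition op (R : realType) (n : nat) := bits n -> bits n -> R[i].

Definition hw (n : nat) (y : bits n) : nat := #|[set i | y i]|.

Definition hdiff (n : nat) (y z : bits n) : int := (hw z)%:Z - (hw y)%:Z.

Definition bits_lt (n : nat) (y z : bits n) : bool :=
  (enum_rank y < enum_rank z)%N.

Definition id_op (R : realType) (n : nat) : op R n :=
  fun y z => if y == z then 1 else 0.

(* Hermitian adjoint (complex conjugate transpose) is implicit below;
   positive semidefiniteness: <v|A|v> >= 0 (real, nonnegative) for all v. *)
Definition psd (R : realType) (n : nat) (A : op R n) : Prop :=
  forall v : bits n -> R[i],
    0 <= \sum_(y : bits n) \sum_(z : bits n) conjc (v y) * A y z * v z.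

Definition POVM (R : realType) (n : nat) (Pi : bits n -> op R n) : Prop :=
  (forall x, psd (Pi x)) /\
  (forall y z, \sum_(x : bits n) Pi x y z = @id_op R n y z).

Definition tr_mul (R : realType) (n : nat) (A B : op R n) : R[i] :=
  \sum_(y : bits n) \sum_(z : bits n) A y z * B z y.

Definition plus_theta (R : realType) (theta : R) (b : bool) : R[i] :=
  (if b then Complex (cos theta) (sin theta) else 1) / Complex (Num.sqrt (2 : R)) 0.

Definition Phi (R : realType) (n : nat) (theta : R) (y : bits n) : R[i] :=
  \prod_(i < n) plus_theta theta (y i).

Definition W (R : realType) (n : nat) (theta : R) : op R n :=
  fun y z => (2 ^+ n)^-1 * @id_op R n y z - Phi theta y * conjc (Phi theta z).

(* Q^θ_Φ(A) = 2^n |tr[W^θ_Φ A]|, a real number (real part of the complex modulus, which is real). *)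
Definition Qwit (R : realType) (n : nat) (theta : R) (A : op R n) : R :=
  2 ^+ n * complex.Re `|tr_mul (W theta) A|.

(* Since |Φ_θ>(y) = 2^(-n/2) e^(i|y|θ), the diagonal of W^θ_Φ vanishes and
   W^θ_Φ(y,z) = -2^-n e^(-i h(y,z) θ) off the diagonal. A positive semidefinite Π_x is
   Hermitian (its quadratic form is real on e_y + e_z and on e_y + i e_z), so in tr[W^θ_Φ Π_x]
   the terms of (y,z) and (z,y) are complex conjugates, and each such pair contributes the
   real number 2^(1-n)(-Re Π_x(y,z) cos(hθ) + Im Π_x(y,z) sin(hθ)). *)

From mathcomp Require Import all_boot all_order all_algebra.
From mathcomp Require Import reals trigo.
From mathcomp.real_closed Require Import complex.
From mathcomp Require Import ring lra.
Import Order.TTheory GRing.Theory Num.Theory.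
Local Open Scope ring_scope.
Local Open Scope complex_scope.

Lemma sum_diag_pairs {T : finType} {V : nmodType} {lt : rel T} (g : T -> T -> V) :
    irreflexive lt -> (forall y z, y != z -> lt y z = ~~ lt z y) ->
  \sum_y \sum_z g y z = \sum_y g y y + \sum_y \sum_(z | lt y z) (g y z + g z y).
Proof.
move=> lt_irr lt_total.
have split_row y :
    \sum_z g y z = g y y + (\sum_(z | lt y z) g y z + \sum_(z | lt z y) g y z).
  rewrite (bigD1 y) //= (bigID (lt y)) /=; congr (_ + (_ + _)); apply: eq_bigl => z.
    by case: eqVneq => [->|]; rewrite ?lt_irr ?andbT.
  by case: eqVneq => [->|/lt_total ->]; rewrite ?lt_irr ?negbK.
under eq_bigr do rewrite split_row.
rewrite big_split /=; congr (_ + _).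
under [RHS]eq_bigr do rewrite big_split /=.
rewrite !big_split /=; congr (_ + _).
by rewrite [RHS](exchange_big_dep xpredT).
Qed.

Lemma bits_lt_irr (n : nat) : irreflexive (@bits_lt n).
Proof. by move=> y; rewrite /bits_lt ltnn. Qed.

Lemma bits_lt_total {n : nat} (y z : bits n) : y != z -> bits_lt y z = ~~ bits_lt z y.
Proof.
move=> yz; rewrite /bits_lt -leqNgt ltn_neqAle.
suff -> : (enum_rank y != enum_rank z :> nat) by [].
by apply: contra yz => /eqP/val_inj/enum_rank_inj ->.
Qed.

Lemma bits_lt_neq {n : nat} (y z : bits n) : bits_lt y z -> y != z.
Proof. by apply: contraTneq => ->; rewrite bits_lt_irr. Qed.

Section Hermitian.
Variables (R : realType) (n : nat).

Definition qform (A : op R n) (v : bits n -> R[i]) : R[i] :=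
  \sum_y \sum_z conjc (v y) * A y z * v z.

Definition pair_vec (y z : bits n) (a b : R[i]) (u : bits n) : R[i] :=
  if u == y then a else if u == z then b else 0.

Lemma sum_pair_vec (y z : bits n) a b (F : bits n -> R[i] -> R[i]) : y != z ->
  (forall u, F u 0 = 0) -> \sum_u F u (pair_vec y z a b u) = F y a + F z b.
Proof.
move=> yz F0; rewrite (bigD1 y) //= (bigD1 z) 1?eq_sym //= big1 ?addr0.
  by rewrite /pair_vec eqxx eq_sym (negbTE yz) eqxx.
by move=> u /andP[uz uy]; rewrite /pair_vec (negbTE uy) (negbTE uz).
Qed.

Lemma qform_pair_vec (A : op R n) (y z : bits n) a b : y != z ->
  qform A (pair_vec y z a b) =
  conjc a * A y y * a + conjc a * A y z * b + conjc b * A z y * a + conjc b * A z z * b.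
Proof.
move=> yz; rewrite /qform.
rewrite (@sum_pair_vec y z a b (fun u c => \sum_w conjc c * A u w * pair_vec y z a b w)) //;
  last by move=> u; apply: big1 => w _; rewrite conjc0 !mul0r.
rewrite !(@sum_pair_vec y z a b (fun w c => _ * A _ w * c)) // => [|w|w]; rewrite ?mulr0 //.
by rewrite !addrA.
Qed.

Definition delta_vec (y u : bits n) : R[i] := if u == y then 1 else 0.

Lemma qform_delta_vec (A : op R n) y : qform A (delta_vec y) = A y y.
Proof.
have sum_delta (F : bits n -> R[i] -> R[i]) :
    (forall u, F u 0 = 0) -> \sum_u F u (delta_vec y u) = F y 1.
  move=> F0; rewrite (bigD1 y) //= big1 ?addr0 /delta_vec ?eqxx //.
  by move=> u /negbTE ->.
rewrite /qform (sum_delta (fun u c => \sum_w conjc c * A u w * delta_vec y w)); last first.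
  by move=> u; apply: big1 => w _; rewrite conjc0 !mul0r.
by rewrite (sum_delta (fun w c => conjc 1 * A y w * c)) ?conjc1 ?mul1r ?mulr1 // => w; rewrite mulr0.
Qed.

Lemma psd_Im_qform (A : op R n) v : psd A -> complex.Im (qform A v) = 0.
Proof. by move=> /(_ v); apply: ger0_Im. Qed.

Lemma psd_hermitian (A : op R n) y z : psd A -> A z y = conjc (A y z).
Proof.
move=> psdA; have [->|yz] := eqVneq y z.
  have := psd_Im_qform _ (delta_vec z) psdA; rewrite qform_delta_vec.
  by case: (A z z) => a b /= ->; rewrite oppr0.
have Im_qform a b := psd_Im_qform _ (pair_vec y z a b) psdA.
move: (Im_qform 1 1) (Im_qform 1 'i) (Im_qform 1 0) (Im_qform 0 1).
rewrite !qform_pair_vec //.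
case: (A y y) (A y z) (A z y) (A z z) => [a1 b1] [a2 b2] [a3 b3] [a4 b4] /=.
by move=> *; congr Complex; lra.
Qed.

End Hermitian.

Definition cis {R : realType} (t : R) : R[i] := Complex (cos t) (sin t).

Section Cis.
Variable R : realType.

Lemma cis0 : cis (0 : R) = 1.
Proof. by rewrite /cis cos0 sin0. Qed.

Lemma cisD (s t : R) : cis (s + t) = cis s * cis t.
Proof. by rewrite /cis cosD sinD /=; congr Complex; ring. Qed.

Lemma cisN (t : R) : cis (- t) = conjc (cis t).
Proof. by rewrite /cis cosN sinN. Qed.

Lemma cis_mulrn (k : nat) (t : R) : cis (k%:R * t) = cis t ^+ k.
Proof.
elim: k => [|k IHk]; first by rewrite mul0r cis0.
by rewrite -addn1 natrD mulrDl mul1r cisD IHk exprD expr1.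
Qed.

End Cis.

Section Witness.
Variables (R : realType) (n : nat) (theta : R).

Lemma Phi_hw (y : bits n) :
  Phi theta y = ((Num.sqrt (2 : R))^-1 ^+ n)%:C * cis ((hw y)%:R * theta).
Proof.
rewrite /Phi /plus_theta big_split /= prodr_const card_ord mulrC.
congr (_ * _).
  by rewrite rmorphXn rmorphV // unitfE sqrtr_eq0 -ltNge ltr0n.
rewrite -big_mkcond /= prodr_const cis_mulrn /hw; congr (_ ^+ _).
by apply: eq_card => i; rewrite inE.
Qed.

Lemma Phi_mulJ (y z : bits n) :
  Phi theta y * conjc (Phi theta z) = ((2 ^+ n)^-1 : R)%:C * conjc (cis ((hdiff y z)%:~R * theta)).
Proof.
have sqr_scale : (Num.sqrt (2 : R))^-1 ^+ n * (Num.sqrt 2)^-1 ^+ n = (2 ^+ n)^-1.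
  by rewrite -exprMn -invfM -expr2 sqr_sqrtr ?ler0n // exprVn.
rewrite !Phi_hw -sqr_scale /cis /hdiff intrB !pmulrn mulrBl cosB sinB /=.
by congr Complex; ring.
Qed.

Lemma W_diag (y : bits n) : W theta y y = 0.
Proof.
rewrite /W /id_op eqxx mulr1 Phi_mulJ /hdiff subrr mul0r cis0 conjc1 mulr1.
by rewrite fmorphV rmorphXn rmorph_nat subrr.
Qed.

Lemma W_offdiag (y z : bits n) : y != z ->
  W theta y z = - ((2 ^+ n)^-1 : R)%:C * conjc (cis ((hdiff y z)%:~R * theta)).
Proof. by move=> yz; rewrite /W /id_op (negbTE yz) mulr0 sub0r Phi_mulJ mulNr. Qed.

Lemma W_pair_term (A : op R n) (y z : bits n) :
    (forall y z, A z y = conjc (A y z)) -> y != z ->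
  W theta y z * A z y + W theta z y * A y z =
  (2 * (2 ^+ n)^-1 * (- complex.Re (A y z) * cos ((hdiff y z)%:~R * theta)
                     + complex.Im (A y z) * sin ((hdiff y z)%:~R * theta)))%:C.
Proof.
move=> herm yz; have zy : z != y by rewrite eq_sym.
rewrite herm !W_offdiag //.
have -> : (hdiff z y)%:~R * theta = - ((hdiff y z)%:~R * theta).
  by rewrite /hdiff -opprB intrN mulNr.
rewrite cisN conjcK /cis.
by case: (A y z) => a b /=; congr Complex; ring.
Qed.

End Witness.

Lemma Re_norm_real (R : realType) (r : R) : complex.Re `|r%:C| = `|r|.
Proof. by rewrite normc_def /= expr0n addr0 sqrtr_sqr. Qed.

Theorem theorem1 (R : realType) (n : nat) (Pi : bits n -> op R n)
  (hPi : POVM Pi) (theta : R) (x : bits n) :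
  Qwit theta (Pi x) =
  2 * `| \sum_(y : bits n) \sum_(z : bits n | bits_lt y z)
          ( - complex.Re (Pi x y z) * cos ((hdiff y z)%:~R * theta)
            + complex.Im (Pi x y z) * sin ((hdiff y z)%:~R * theta)) |.
Proof.
have herm y z : Pi x z y = conjc (Pi x y z) by apply: psd_hermitian; exact: hPi.1.
rewrite /Qwit /tr_mul (sum_diag_pairs _ (bits_lt_irr n) bits_lt_total).
rewrite big1 ?add0r => [|y _]; last by rewrite W_diag mul0r.
under eq_bigr => y _ do under eq_bigr => z lt_yz do
  rewrite W_pair_term // ?bits_lt_neq //.
under eq_bigr do rewrite -rmorph_sum -mulr_sumr.
rewrite -rmorph_sum -mulr_sumr Re_norm_real normrM ger0_norm; last first.
  by rewrite mulr_ge0 // invr_ge0 exprn_ge0.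
by rewrite mulrA mulrCA mulfV ?mulr1 // expf_neq0 // pnatr_eq0.
Qed.
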